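(* Every equilibrium of system $(\ast\ast)$ in the open cube $(0,1)^3$ (i.e. every point $(x^*,y^*,\tfrac12)\in(0,1)^3$ with $(1+\theta_1)x^*+(1+\theta_2)y^*=2$) is neutrally stable: it is Lyapunov stable but not asymptotically stable.
   Context: Modified Prisoner's Dilemma system. Fix constants $\delta_{PS_1}=P_1-S_1>0$, $\delta_{TR_1}=T_1-R_1>0$, $\delta_{PS_2}=P_2-S_2>0$, $\delta_{TR_2}=T_2-R_2>0$ and $\theta_1,\theta_2>0$. Put $\phi_1(y)=\delta_{PS_1}+(\delta_{TR_1}-\delta_{PS_1})y$ and $\phi_2(x)=\delta_{PS_2}+(\delta_{TR_2}-\delta_{PS_2})x$. System $(\ast\ast)$ on $[0,1]^3$ is $\dot x = x(1-x)\phi_1(y)(1-2r)$, $\dot y = y(1-y)\phi_2(x)(1-2r)$, $\dot r = r(1-r)[(1+\theta_1)x+(1+\theta_2)y-2]$. *)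

From Stdlib Require Import Reals Lra.
Open Scope R_scope.

Definition vfield := R -> R -> R -> R * R * R.

Definition phi1 (dPS1 dTR1 y : R) : R := dPS1 + (dTR1 - dPS1) * y.
Definition phi2 (dPS2 dTR2 x : R) : R := dPS2 + (dTR2 - dPS2) * x.

Definition PD_field (dPS1 dTR1 dPS2 dTR2 th1 th2 : R) : vfield :=
  fun x y r =>
    ( x * (1 - x) * phi1 dPS1 dTR1 y * (1 - 2 * r),
      y * (1 - y) * phi2 dPS2 dTR2 x * (1 - 2 * r),
      r * (1 - r) * ((1 + th1) * x + (1 + th2) * y - 2) ).

Definition dist3 (a b : R * R * R) : R :=
  let '(a1, a2, a3) := a in
  let '(b1, b2, b3) := b in
  sqrt ((a1 - b1) ^ 2 + (a2 - b2) ^ 2 + (a3 - b3) ^ 2).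

Definition right_cont0 (g : R -> R) : Prop :=
  forall eps, eps > 0 -> exists d, d > 0 /\
    forall t, 0 <= t < d -> Rabs (g t - g 0) < eps.

Definition ode_at (F : vfield) (x y r : R -> R) (t : R) : Prop :=
  derivable_pt_lim x t (fst (fst (F (x t) (y t) (r t)))) /\
  derivable_pt_lim y t (snd (fst (F (x t) (y t) (r t)))) /\
  derivable_pt_lim r t (snd (F (x t) (y t) (r t))).

Definition is_sol_on (F : vfield) (T : R) (x y r : R -> R) : Prop :=
  (forall t, 0 < t < T -> ode_at F x y r t) /\
  right_cont0 x /\ right_cont0 y /\ right_cont0 r.

Definition is_global_sol (F : vfield) (x y r : R -> R) : Prop :=
  (forall t, 0 < t -> ode_at F x y r t) /\
  right_cont0 x /\ right_cont0 y /\ right_cont0 r.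

Definition lyapunov_stable (F : vfield) (p : R * R * R) : Prop :=
  forall eps, eps > 0 -> exists del, del > 0 /\
    forall (T : R) (x y r : R -> R), is_sol_on F T x y r ->
      dist3 (x 0, y 0, r 0) p < del ->
      forall t, 0 <= t < T -> dist3 (x t, y t, r t) p < eps.

Definition attractive (F : vfield) (p : R * R * R) : Prop :=
  exists eta, eta > 0 /\
    forall (x y r : R -> R), is_global_sol F x y r ->
      dist3 (x 0, y 0, r 0) p < eta ->
      forall eps, eps > 0 -> exists T0, forall t, t >= T0 ->
        dist3 (x t, y t, r t) p < eps.

Definition asymptotically_stable (F : vfield) (p : R * R * R) : Prop :=
  lyapunov_stable F p /\ attractive F p.

Definition neutrally_stable (F : vfield) (p : R * R * R) : Prop :=
  lyapunov_stable F p /\ ~ asymptotically_stable F p.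

From Stdlib Require Import Reals Lra Ranalysis5 ClassicalEpsilon Classical.
From Coquelicot Require Import Coquelicot.
Open Scope R_scope.

(* With [P_i z = δPS_i ln z - δTR_i ln (1 - z)], both [P2 x] and [P1 y] have time derivative
   [φ1(y) φ2(x) (1 - 2r)], so [P2 x - P1 y] is conserved and near the equilibrium a solution
   stays on a curve [y = Y_h(x)].  On that curve the reduced planar system conserves
     E = - ln (4 r (1 - r)) + ∫_{x_e}^x G_h(z) / (z (1 - z) φ1(Y_h z)) dz,
   where [G_h(x) = (1 + θ1) x + (1 + θ2) Y_h(x) - 2] and [G_h(x_e) = 0].  [G_h] is increasing
   with bounded slope, so [E] is comparable to [(x - x_e)^2 + (r - 1/2)^2]; since [x_e] is
   within a constant times the initial deviation, a barrier argument in time gives Lyapunov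
   stability.  Asymptotic stability fails because every point of the segment
   [r = 1/2, (1 + θ1) x + (1 + θ2) y = 2] is itself an equilibrium. *)

(** * Estimates from the mean value theorem *)

Lemma le_of_derive_sign (g dg : R -> R) (a z : R) :
  (forall w, Rmin a z <= w <= Rmax a z -> is_derive g w (dg w)) ->
  (forall w, Rmin a z < w < Rmax a z -> 0 <= dg w * (z - a)) ->
  g a <= g z.
Proof.
  intros Hd Hs.
  destruct (Rtotal_order a z) as [Haz | [-> | Hza]]; [| lra |].
  - rewrite Rmin_left, Rmax_right in * by lra.
    destruct (MVT_cor2 g dg a z Haz) as [c [Hc Hac]].
    + intros c Hc; apply is_derive_Reals, Hd; lra.
    + specialize (Hs c Hac); lra.
  - rewrite Rmin_right, Rmax_left in * by lra.
    destruct (MVT_cor2 g dg z a Hza) as [c [Hc Hac]].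
    + intros c Hc; apply is_derive_Reals, Hd; lra.
    + specialize (Hs c Hac); lra.
Qed.

Lemma linear_bounds_of_derive (f df : R -> R) (u v m M : R) : u <= v ->
  (forall w, u <= w <= v -> is_derive f w (df w)) ->
  (forall w, u < w < v -> m <= df w <= M) ->
  m * (v - u) <= f v - f u <= M * (v - u).
Proof.
  intros Huv Hd Hb.
  assert (Hseg : forall w, Rmin u v <= w <= Rmax u v -> u <= w <= v)
    by (rewrite Rmin_left, Rmax_right by lra; auto).
  assert (Hseg' : forall w, Rmin u v < w < Rmax u v -> u < w < v)
    by (rewrite Rmin_left, Rmax_right by lra; auto).
  split.
  - enough (f u - m * u <= f v - m * v) by lra.
    apply (le_of_derive_sign (fun w => f w - m * w) (fun w => df w - m * 1)).
    + intros w Hw. apply (is_derive_minus f (fun w => m * w)); [apply Hd, Hseg, Hw |].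
      auto_derive; auto; ring.
    + intros w Hw. specialize (Hb w (Hseg' w Hw)). nra.
  - enough (M * u - f u <= M * v - f v) by lra.
    apply (le_of_derive_sign (fun w => M * w - f w) (fun w => M * 1 - df w)).
    + intros w Hw. apply (is_derive_minus (fun w => M * w) f); [| apply Hd, Hseg, Hw].
      auto_derive; auto; ring.
    + intros w Hw. specialize (Hb w (Hseg' w Hw)). nra.
Qed.

Lemma mul_nonneg_same_sign (A p q : R) : 0 <= A * p -> 0 < p * q -> 0 <= A * q.
Proof.
  intros HAp Hpq. destruct (Rle_dec 0 (A * q)) as [|Hn]; auto.
  assert (0 < p * p) by (destruct (Req_dec p 0) as [->|]; [lra | nra]).
  assert (A * q * (p * p) < 0) by nra. nra.
Qed.

Lemma quadratic_bounds_of_derive (f df : R -> R) (a z c C : R) :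
  (forall w, Rmin a z <= w <= Rmax a z -> is_derive f w (df w)) ->
  (forall w, Rmin a z < w < Rmax a z ->
     c * (w - a) ^ 2 <= df w * (w - a) <= C * (w - a) ^ 2) ->
  c / 2 * (z - a) ^ 2 <= f z - f a <= C / 2 * (z - a) ^ 2.
Proof.
  intros Hd Hb.
  assert (Hsign : forall w, Rmin a z < w < Rmax a z -> 0 < (w - a) * (z - a)).
  { intros w Hw. destruct (Rle_dec a z).
    - rewrite Rmin_left, Rmax_right in Hw by lra. nra.
    - rewrite Rmin_right, Rmax_left in Hw by lra. nra. }
  split.
  - enough (f a - c / 2 * (a - a) ^ 2 <= f z - c / 2 * (z - a) ^ 2) by lra.
    apply (le_of_derive_sign (fun w => f w - c / 2 * (w - a) ^ 2)
             (fun w => df w - c * (w - a))).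
    + intros w Hw. apply (is_derive_minus f (fun w => c / 2 * (w - a) ^ 2)); [apply Hd, Hw |].
      auto_derive; [auto | field].
    + intros w Hw. apply (mul_nonneg_same_sign _ (w - a)); [|apply Hsign, Hw].
      specialize (Hb w Hw). nra.
  - enough (C / 2 * (a - a) ^ 2 - f a <= C / 2 * (z - a) ^ 2 - f z) by lra.
    apply (le_of_derive_sign (fun w => C / 2 * (w - a) ^ 2 - f w)
             (fun w => C * (w - a) - df w)).
    + intros w Hw. apply (is_derive_minus (fun w => C / 2 * (w - a) ^ 2) f); [|apply Hd, Hw].
      auto_derive; [auto | field].
    + intros w Hw. apply (mul_nonneg_same_sign _ (w - a)); [|apply Hsign, Hw].
      specialize (Hb w Hw). nra.
Qed.

Definition log_potential (A B z : R) : R := A * ln z - B * ln (1 - z).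

Lemma is_derive_log_potential A B z : 0 < z < 1 ->
  is_derive (log_potential A B) z (A / z + B / (1 - z)).
Proof.
  intros Hz. unfold log_potential. auto_derive.
  - repeat split; lra.
  - field; lra.
Qed.

Lemma continuity_pt_log_potential A B z : 0 < z < 1 -> continuity_pt (log_potential A B) z.
Proof.
  intros Hz. apply derivable_continuous_pt. eexists.
  apply is_derive_Reals, is_derive_log_potential, Hz.
Qed.

Lemma inv_bounds (d w : R) : 0 < d <= w -> w <= 1 -> 1 <= / w <= / d.
Proof.
  intros Hw Hw1. split.
  - rewrite <- Rinv_1. apply Rinv_le_contravar; lra.
  - apply Rinv_le_contravar; lra.
Qed.

Lemma log_potential_bounds A B d u v : 0 <= A -> 0 <= B -> 0 < d ->
  d <= u <= v -> v <= 1 - d ->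
  (A + B) * (v - u) <= log_potential A B v - log_potential A B u <= (A + B) / d * (v - u).
Proof.
  intros HA HB Hd Hu Hv.
  apply (linear_bounds_of_derive _ (fun w => A / w + B / (1 - w))); [lra | |].
  - intros w Hw. apply is_derive_log_potential. lra.
  - intros w Hw. unfold Rdiv.
    pose proof (inv_bounds d w ltac:(lra) ltac:(lra)).
    pose proof (inv_bounds d (1 - w) ltac:(lra) ltac:(lra)).
    split; nra.
Qed.

Lemma log_potential_lipschitz A B d u v : 0 <= A -> 0 <= B -> 0 < d ->
  d <= u <= 1 - d -> d <= v <= 1 - d ->
  Rabs (log_potential A B v - log_potential A B u) <= (A + B) / d * Rabs (v - u).
Proof.
  intros HA HB Hd Hu Hv. assert (0 <= (A + B) / d) by (apply Rdiv_le_0_compat; lra).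
  destruct (Rle_dec u v).
  - pose proof (log_potential_bounds A B d u v HA HB Hd ltac:(lra) ltac:(lra)).
    rewrite !Rabs_right by nra. lra.
  - pose proof (log_potential_bounds A B d v u HA HB Hd ltac:(lra) ltac:(lra)).
    rewrite !Rabs_left1 by nra. lra.
Qed.

(* Some preimage of [v] in [[a, b]]; unspecified when there is none. *)
Definition inv_on (P : R -> R) (a b v : R) : R :=
  epsilon (inhabits a) (fun y => a <= y <= b /\ P y = v).

Lemma inv_on_spec P a b v : a < b ->
  (forall z, a <= z <= b -> continuity_pt P z) -> P a < v < P b ->
  a <= inv_on P a b v <= b /\ P (inv_on P a b v) = v.
Proof.
  intros Hab Hc Hv. unfold inv_on.
  apply (epsilon_spec (inhabits a) (fun y => a <= y <= b /\ P y = v)).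
  destruct (IVT_interv (fun z => P z - v) a b) as [z [Hz HPz]]; try lra.
  - intros z Hz. apply continuity_pt_minus; [apply Hc, Hz | apply continuity_pt_const].
    intros ? ?; reflexivity.
  - exists z. split; [exact Hz | lra].
Qed.

Lemma continuity_pt_eps f z : continuity_pt f z -> forall eps, eps > 0 ->
  exists d, d > 0 /\ forall w, Rabs (w - z) < d -> Rabs (f w - f z) < eps.
Proof.
  intros Hc eps He. destruct (Hc eps He) as [d [Hd H]].
  exists d. split; auto. intros w Hw.
  destruct (Req_dec w z) as [->|Hne].
  - rewrite Rminus_diag, Rabs_R0. lra.
  - apply (H w). split; [split; [exact I | auto] | exact Hw].
Qed.

Lemma continuity_pt_lipschitz (f : R -> R) z rad K : 0 < rad ->
  (forall w, Rabs (w - z) < rad -> Rabs (f w - f z) <= K * Rabs (w - z)) ->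
  continuity_pt f z.
Proof.
  intros Hrad Hlip eps Heps.
  set (d := Rmin rad (eps / (Rabs K + 1))).
  assert (Hd1 : d <= rad) by apply Rmin_l.
  assert (Hd2 : d <= eps / (Rabs K + 1)) by apply Rmin_r.
  assert (HK : 0 < Rabs K + 1) by (pose proof (Rabs_pos K); lra).
  exists d. split.
  - apply Rmin_glb_lt; [lra | apply Rdiv_lt_0_compat; lra].
  - intros w [_ Hw]. simpl in *. unfold R_dist in *.
    specialize (Hlip w ltac:(lra)).
    assert (K * Rabs (w - z) <= Rabs K * Rabs (w - z))
      by (apply Rmult_le_compat_r; [apply Rabs_pos | apply Rle_abs]).
    assert (Heps' : (Rabs K + 1) * (eps / (Rabs K + 1)) = eps) by (field; lra).
    pose proof (Rabs_pos (w - z)). pose proof (Rabs_pos K). nra.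
Qed.

(** * Solutions and stability *)

Lemma right_cont0_comp (g x : R -> R) :
  continuity_pt g (x 0) -> right_cont0 x -> right_cont0 (fun t => g (x t)).
Proof.
  intros Hg Hx eps He. destruct (continuity_pt_eps g (x 0) Hg eps He) as [d [Hd H]].
  destruct (Hx d Hd) as [d' [Hd' H']]. exists d'. split; auto.
Qed.

Lemma right_cont0_plus (f g : R -> R) :
  right_cont0 f -> right_cont0 g -> right_cont0 (fun t => f t + g t).
Proof.
  intros Hf Hg eps He.
  destruct (Hf (eps / 2) ltac:(lra)) as [d1 [Hd1 H1]].
  destruct (Hg (eps / 2) ltac:(lra)) as [d2 [Hd2 H2]].
  exists (Rmin d1 d2). split; [apply Rmin_glb_lt; lra |].
  intros t Ht. pose proof (Rmin_l d1 d2). pose proof (Rmin_r d1 d2).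
  specialize (H1 t ltac:(lra)). specialize (H2 t ltac:(lra)).
  replace (f t + g t - (f 0 + g 0)) with ((f t - f 0) + (g t - g 0)) by ring.
  pose proof (Rabs_triang (f t - f 0) (g t - g 0)). lra.
Qed.

Lemma le_of_lt_on_left (f : R -> R) (c s : R) : 0 < s -> continuity_pt f s ->
  (forall u, 0 <= u < s -> f u < c) -> f s <= c.
Proof.
  intros Hs Hc Hbefore.
  destruct (Rle_lt_dec (f s) c) as [|Hgt]; auto. exfalso.
  destruct (continuity_pt_eps f s Hc (f s - c) ltac:(lra)) as [d [Hd Hf]].
  set (u := Rmax 0 (s - d / 2)).
  assert (0 <= u) by apply Rmax_l. assert (s - d / 2 <= u) by apply Rmax_r.
  assert (u < s) by (apply Rmax_lub_lt; lra).
  specialize (Hf u ltac:(apply Rabs_def1; lra)). apply Rabs_def2 in Hf.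
  specialize (Hbefore u ltac:(lra)). lra.
Qed.

Lemma lt_on_right (T c : R) (f : R -> R) (s : R) :
  (forall t, 0 < t < T -> continuity_pt f t) -> right_cont0 f -> 0 <= s < T -> f s < c ->
  exists d, d > 0 /\ forall u, s <= u < s + d -> f u < c.
Proof.
  intros Hc Hr Hs Hfs. destruct (Req_dec s 0) as [->|Hz].
  - destruct (Hr (c - f 0) ltac:(lra)) as [d [Hd Hf]].
    exists d. split; auto. intros u Hu.
    specialize (Hf u ltac:(lra)). apply Rabs_def2 in Hf. lra.
  - destruct (continuity_pt_eps f s (Hc s ltac:(lra)) (c - f s) ltac:(lra)) as [d [Hd Hf]].
    exists d. split; auto. intros u Hu.
    specialize (Hf u ltac:(apply Rabs_def1; lra)). apply Rabs_def2 in Hf. lra.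
Qed.

Lemma continuous_induction (T c : R) (f : R -> R) :
  (forall t, 0 < t < T -> continuity_pt f t) -> right_cont0 f -> f 0 < c ->
  (forall tau, 0 <= tau < T -> (forall s, 0 <= s <= tau -> f s <= c) -> f tau < c) ->
  forall t, 0 <= t < T -> f t < c.
Proof.
  intros Hc Hr H0 Hstep t0 Ht0.
  destruct (Rlt_le_dec (f t0) c) as [|Hbad]; auto. exfalso.
  set (E := fun s => 0 <= s <= t0 /\ forall u, 0 <= u <= s -> f u < c).
  assert (HE0 : E 0).
  { split; [lra |]. intros u Hu. replace u with 0 by lra. auto. }
  assert (Hb : bound E) by (exists t0; intros s [Hs _]; lra).
  destruct (completeness E Hb (ex_intro _ 0 HE0)) as [sg [Hub Hlub]].
  assert (Hsg0 : 0 <= sg) by (apply Hub; auto).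
  assert (Hsg1 : sg <= t0) by (apply Hlub; intros s [Hs _]; lra).
  assert (Hbefore : forall u, 0 <= u < sg -> f u < c).
  { intros u Hu. apply NNPP. intros Hn.
    enough (sg <= u) by lra. apply Hlub. intros s [Hs Hs2].
    destruct (Rle_lt_dec s u); auto. exfalso. apply Hn, Hs2. lra. }
  assert (Hat : f sg < c).
  { apply Hstep; [lra |]. intros s Hs.
    destruct (Req_dec s sg) as [->|]; [| left; apply Hbefore; lra].
    destruct (Req_dec sg 0) as [->|Hz]; [lra |].
    apply le_of_lt_on_left; [lra | apply Hc; lra | exact Hbefore]. }
  destruct (lt_on_right T c f sg Hc Hr ltac:(lra) Hat) as [d [Hd Hafter]].
  destruct (Rlt_le_dec t0 (sg + d)).
  - specialize (Hafter t0 ltac:(lra)). lra.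
  - enough (HE : E (sg + d / 2)) by (specialize (Hub _ HE); lra).
    split; [lra |]. intros u Hu.
    destruct (Rlt_le_dec u sg); [apply Hbefore | apply Hafter]; lra.
Qed.

Lemma eq_at0_of_derive0 (f : R -> R) (tau : R) : 0 <= tau ->
  (forall t, 0 < t <= tau -> is_derive f t 0) -> right_cont0 f -> f tau = f 0.
Proof.
  intros Htau Hd Hr.
  destruct (Req_dec tau 0) as [->|Hz]; auto.
  assert (Hconst : forall u, 0 < u < tau -> f u = f tau).
  { intros u Hu.
    pose proof (linear_bounds_of_derive f (fun _ => 0) u tau 0 0) as Hb.
    enough (f tau - f u = 0) by lra.
    assert (0 * (tau - u) = 0) by ring.
    destruct Hb; [lra | intros w Hw; apply Hd; lra | intros; lra | lra]. }
  apply NNPP. intros Hne.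
  destruct (Hr (Rabs (f tau - f 0)) ltac:(apply Rabs_pos_lt; lra)) as [d [Hd' Hf]].
  set (u := Rmin (d / 2) (tau / 2)).
  assert (0 < u) by (apply Rmin_glb_lt; lra).
  assert (u <= d / 2) by apply Rmin_l. assert (u <= tau / 2) by apply Rmin_r.
  specialize (Hf u ltac:(lra)). rewrite Hconst in Hf by lra. lra.
Qed.

Lemma is_global_sol_const (F : vfield) (a b c : R) : F a b c = (0, 0, 0) ->
  is_global_sol F (fun _ => a) (fun _ => b) (fun _ => c).
Proof.
  intros HF.
  assert (Hrc : forall k, right_cont0 (fun _ => k)).
  { intros k eps He. exists 1. split; [lra |]. intros.
    rewrite Rminus_diag, Rabs_R0. lra. }
  repeat split; auto. all: rewrite HF; apply derivable_pt_lim_const.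
Qed.

Lemma not_attractive_of_equilibria (F : vfield) (p : R * R * R) :
  (forall eta, eta > 0 ->
     exists a b c, F a b c = (0, 0, 0) /\ 0 < dist3 (a, b, c) p < eta) ->
  ~ attractive F p.
Proof.
  intros Heq [eta [Heta Hat]].
  destruct (Heq eta Heta) as [a [b [c [HF [Hpos Hlt]]]]].
  destruct (Hat _ _ _ (is_global_sol_const F a b c HF) Hlt _ Hpos) as [T0 HT0].
  specialize (HT0 T0 (Rge_refl T0)). lra.
Qed.

Lemma Rabs_le_of_sq_le a b : 0 <= b -> a ^ 2 <= b ^ 2 -> Rabs a <= b.
Proof.
  intros Hb H. rewrite <- pow2_abs in H. destruct (Rle_dec (Rabs a) b) as [|Hn]; auto.
  assert (b ^ 2 < Rabs a ^ 2) by (pose proof (Rabs_pos a); nra). lra.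
Qed.

Section PrisonersDilemma.
Variables PS1 TR1 PS2 TR2 th1 th2 xs ys : R.
Hypotheses (HPS1 : PS1 > 0) (HTR1 : TR1 > 0) (HPS2 : PS2 > 0) (HTR2 : TR2 > 0)
  (Hth1 : th1 > 0) (Hth2 : th2 > 0) (Hxs : 0 < xs < 1) (Hys : 0 < ys < 1)
  (Hline : (1 + th1) * xs + (1 + th2) * ys = 2).

Let c1 := 1 + th1.
Let c2 := 1 + th2.
Let m1 := PS1 + TR1.
Let m2 := PS2 + TR2.
Let P1 := log_potential PS1 TR1.
Let P2 := log_potential PS2 TR2.

Lemma params_pos : 0 < c1 /\ 0 < c2 /\ 0 < m1 /\ 0 < m2.
Proof. unfold c1, c2, m1, m2. lra. Qed.

Lemma line_eq : c1 * xs + c2 * ys = 2.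
Proof. exact Hline. Qed.

Definition first_integral (x y : R) : R := P2 x - P1 y.
Definition hs : R := first_integral xs ys.

(* On [[d0, 1 - d0]], which contains [xs ± 2 d0] and [ys ± 2 d0], [P_i] is bi-Lipschitz with
   constants [m_i] and [m_i / d0].  For [|z - xs| < 2 rho] and [|h - hs| <= eta] the value
   [P2 z - h] then lies in [P1 ([ys - d0, ys + d0])], and [Ly] bounds the slope of [Yh h]. *)
Definition d0 : R := Rmin (Rmin xs (1 - xs)) (Rmin ys (1 - ys)) / 2.
Definition rho : R := Rmin (d0 / 2) (m1 * d0 ^ 2 / (4 * m2)).
Definition eta : R := Rmin (m2 * rho) (m1 * d0 / 4).
Definition Ly : R := m2 / (m1 * d0).

Lemma d0_facts : 0 < d0 /\ 2 * d0 <= xs <= 1 - 2 * d0 /\ 2 * d0 <= ys <= 1 - 2 * d0.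
Proof.
  unfold d0.
  pose proof (Rmin_l (Rmin xs (1 - xs)) (Rmin ys (1 - ys))).
  pose proof (Rmin_r (Rmin xs (1 - xs)) (Rmin ys (1 - ys))).
  pose proof (Rmin_l xs (1 - xs)). pose proof (Rmin_r xs (1 - xs)).
  pose proof (Rmin_l ys (1 - ys)). pose proof (Rmin_r ys (1 - ys)).
  assert (0 < Rmin (Rmin xs (1 - xs)) (Rmin ys (1 - ys)))
    by (repeat apply Rmin_glb_lt; lra).
  repeat split; lra.
Qed.

Lemma rho_facts : 0 < rho /\ 2 * rho <= d0 /\ m2 * (2 * rho) <= m1 * d0 ^ 2 / 2.
Proof.
  destruct d0_facts as [Hd _].
  destruct params_pos as [_ [_ [Hm1 Hm2]]].
  assert (Hm : 0 < m1 * d0 ^ 2 / (4 * m2))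
    by (apply Rdiv_lt_0_compat; [apply Rmult_lt_0_compat; [|apply pow_lt] |]; lra).
  pose proof (Rmin_l (d0 / 2) (m1 * d0 ^ 2 / (4 * m2))).
  pose proof (Rmin_r (d0 / 2) (m1 * d0 ^ 2 / (4 * m2))).
  assert (m2 * (m1 * d0 ^ 2 / (4 * m2)) = m1 * d0 ^ 2 / 4) by (unfold m2; field; lra).
  fold rho in *.
  repeat split; [apply Rmin_glb_lt; lra | lra | nra].
Qed.

Lemma eta_facts : 0 < eta /\ eta <= m2 * rho /\ eta <= m1 * d0 / 4.
Proof.
  destruct d0_facts as [Hd _]. destruct rho_facts as [He _].
  pose proof (Rmin_l (m2 * rho) (m1 * d0 / 4)). pose proof (Rmin_r (m2 * rho) (m1 * d0 / 4)).
  fold eta in *. repeat split; try lra. apply Rmin_glb_lt; unfold m1, m2; nra.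
Qed.

Lemma Ly_pos : 0 < Ly.
Proof. destruct d0_facts as [Hd _]. unfold Ly, m1, m2. apply Rdiv_lt_0_compat; nra. Qed.

Lemma P1_bounds u v : d0 <= u <= v -> v <= 1 - d0 ->
  m1 * (v - u) <= P1 v - P1 u <= m1 / d0 * (v - u).
Proof. destruct d0_facts as [Hd _]. apply log_potential_bounds; lra. Qed.

Lemma P2_bounds u v : d0 <= u <= v -> v <= 1 - d0 ->
  m2 * (v - u) <= P2 v - P2 u <= m2 / d0 * (v - u).
Proof. destruct d0_facts as [Hd _]. apply log_potential_bounds; lra. Qed.

Lemma near_xs_range z : Rabs (z - xs) < 2 * rho -> d0 <= z <= 1 - d0.
Proof.
  intros Hz. destruct d0_facts as [Hd [Hx _]]. destruct rho_facts as [_ [He _]].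
  apply Rabs_def2 in Hz. lra.
Qed.

Lemma near_xs_between a b w : Rabs (a - xs) < 2 * rho -> Rabs (b - xs) < 2 * rho ->
  Rmin a b <= w <= Rmax a b -> Rabs (w - xs) < 2 * rho.
Proof.
  intros Ha Hb Hw. apply Rabs_def2 in Ha. apply Rabs_def2 in Hb. apply Rabs_def1.
  - destruct (Rle_dec a b); [rewrite Rmax_right in Hw | rewrite Rmax_left in Hw]; lra.
  - destruct (Rle_dec a b); [rewrite Rmin_left in Hw | rewrite Rmin_right in Hw]; lra.
Qed.

(** * Level curves of the first integral *)

(* Near [(xs, ys)] the level set [first_integral x y = h] is the graph of [Yh h]. *)
Definition Yh (h z : R) : R := inv_on P1 (ys - d0) (ys + d0) (P2 z - h).

Lemma level_value_range h z : Rabs (h - hs) <= eta -> Rabs (z - xs) < 2 * rho ->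
  P1 (ys - d0) < P2 z - h < P1 (ys + d0).
Proof.
  intros Hh Hz. destruct d0_facts as [Hd [Hx Hy]].
  destruct rho_facts as [He [He2 He3]]. destruct eta_facts as [Het [_ Het3]].
  pose proof (near_xs_range z Hz).
  pose proof (log_potential_lipschitz PS2 TR2 d0 xs z ltac:(lra) ltac:(lra) Hd
                ltac:(lra) ltac:(lra)) as Hp.
  fold P2 m2 in Hp.
  assert (Hp' : Rabs (P2 z - P2 xs) <= m1 * d0 / 2).
  { assert (m2 / d0 * Rabs (z - xs) <= m2 / d0 * (2 * rho)).
    { apply Rmult_le_compat_l; [apply Rdiv_le_0_compat; unfold m2; lra | lra]. }
    assert (m2 / d0 * (2 * rho) = m2 * (2 * rho) / d0) by (field; lra).
    assert (m2 * (2 * rho) / d0 <= m1 * d0 ^ 2 / 2 / d0)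
      by (apply Rmult_le_compat_r; [left; apply Rinv_0_lt_compat |]; lra).
    assert (m1 * d0 ^ 2 / 2 / d0 = m1 * d0 / 2) by (field; lra). lra. }
  pose proof (P1_bounds (ys - d0) ys ltac:(lra) ltac:(lra)) as [Hq1 _].
  pose proof (P1_bounds ys (ys + d0) ltac:(lra) ltac:(lra)) as [Hq2 _].
  unfold hs, first_integral in Hh. fold P1 P2 in Hh.
  apply Rabs_le_between in Hp'. apply Rabs_le_between in Hh.
  destruct params_pos as [_ [_ [Hm1 _]]]. nra.
Qed.

Lemma Yh_spec h z : Rabs (h - hs) <= eta -> Rabs (z - xs) < 2 * rho ->
  ys - d0 <= Yh h z <= ys + d0 /\ P1 (Yh h z) = P2 z - h.
Proof.
  intros Hh Hz. destruct d0_facts as [Hd [_ Hy]]. apply inv_on_spec.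
  - lra.
  - intros w Hw. apply continuity_pt_log_potential. lra.
  - apply level_value_range; assumption.
Qed.

Lemma P1_injective u v : ys - d0 <= u <= ys + d0 -> ys - d0 <= v <= ys + d0 ->
  P1 u = P1 v -> u = v.
Proof.
  intros Hu Hv HP. destruct d0_facts as [Hd [_ Hy]]. destruct params_pos as [_ [_ [Hm1 _]]].
  destruct (Rle_dec u v).
  - pose proof (P1_bounds u v ltac:(lra) ltac:(lra)). nra.
  - pose proof (P1_bounds v u ltac:(lra) ltac:(lra)). nra.
Qed.

Lemma Yh_unique h z y : Rabs (h - hs) <= eta -> Rabs (z - xs) < 2 * rho ->
  ys - d0 <= y <= ys + d0 -> P1 y = P2 z - h -> Yh h z = y.
Proof.
  intros Hh Hz Hy HP. destruct (Yh_spec h z Hh Hz) as [HY HPY].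
  apply P1_injective; congruence.
Qed.

Lemma Yh_lipschitz h z1 z2 : Rabs (h - hs) <= eta ->
  Rabs (z1 - xs) < 2 * rho -> Rabs (z2 - xs) < 2 * rho -> z1 <= z2 ->
  0 <= Yh h z2 - Yh h z1 <= Ly * (z2 - z1).
Proof.
  intros Hh Hz1 Hz2 Hle. destruct d0_facts as [Hd [_ Hy]].
  destruct params_pos as [_ [_ [Hm1 Hm2]]].
  destruct (Yh_spec h z1 Hh Hz1) as [R1 E1]. destruct (Yh_spec h z2 Hh Hz2) as [R2 E2].
  pose proof (near_xs_range z1 Hz1). pose proof (near_xs_range z2 Hz2).
  pose proof (P2_bounds z1 z2 ltac:(lra) ltac:(lra)) as [Hp1 Hp2].
  assert (Hmono : Yh h z1 <= Yh h z2).
  { destruct (Rle_dec (Yh h z1) (Yh h z2)) as [|Hn]; auto.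
    pose proof (P1_bounds (Yh h z2) (Yh h z1) ltac:(lra) ltac:(lra)) as [Hq _]. nra. }
  pose proof (P1_bounds (Yh h z1) (Yh h z2) ltac:(lra) ltac:(lra)) as [Hq _].
  split; [lra |].
  apply Rmult_le_reg_l with m1; [lra |].
  replace (m1 * (Ly * (z2 - z1))) with (m2 / d0 * (z2 - z1)) by (unfold Ly; field; lra).
  lra.
Qed.

Lemma continuity_pt_Yh h z : Rabs (h - hs) <= eta -> Rabs (z - xs) < 2 * rho ->
  continuity_pt (Yh h) z.
Proof.
  intros Hh Hz. apply (continuity_pt_lipschitz _ z (2 * rho - Rabs (z - xs)) Ly); [lra |].
  intros w Hw.
  assert (Hw' : Rabs (w - xs) < 2 * rho).
  { replace (w - xs) with ((w - z) + (z - xs)) by ring.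
    pose proof (Rabs_triang (w - z) (z - xs)). lra. }
  destruct (Rle_dec z w).
  - pose proof (Yh_lipschitz h z w Hh Hz Hw' r).
    rewrite !Rabs_right by lra. lra.
  - pose proof (Yh_lipschitz h w z Hh Hw' Hz ltac:(lra)).
    rewrite !Rabs_left1 by lra. lra.
Qed.

Lemma Yh_increment h z w : Rabs (h - hs) <= eta ->
  Rabs (z - xs) < 2 * rho -> Rabs (w - xs) < 2 * rho ->
  (0 <= (Yh h z - Yh h w) * (z - w) <= Ly * (z - w) ^ 2) /\
  (Yh h z - Yh h w) ^ 2 <= Ly ^ 2 * (z - w) ^ 2.
Proof.
  intros Hh Hz Hw. pose proof Ly_pos. destruct (Rle_dec w z).
  - pose proof (Yh_lipschitz h w z Hh Hw Hz r). repeat split; nra.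
  - pose proof (Yh_lipschitz h z w Hh Hz Hw ltac:(lra)). repeat split; nra.
Qed.

(** * The energy on a level curve *)

(* [Fh h] is chosen so that [Dr r + Psi h xe x] below is conserved on the level [h]. *)
Definition Gh (h z : R) : R := c1 * z + c2 * Yh h z - 2.
Definition Fh (h z : R) : R := Gh h z / (z * (1 - z) * phi1 PS1 TR1 (Yh h z)).

Lemma phi1_bounds y : d0 <= y <= 1 - d0 -> m1 * d0 <= phi1 PS1 TR1 y <= m1.
Proof.
  intros Hy. destruct d0_facts as [Hd _]. unfold phi1, m1. split; nra.
Qed.

Lemma Fh_denominator_bounds h z : Rabs (h - hs) <= eta -> Rabs (z - xs) < 2 * rho ->
  m1 * d0 ^ 3 <= z * (1 - z) * phi1 PS1 TR1 (Yh h z) <= m1.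
Proof.
  intros Hh Hz. destruct d0_facts as [Hd [_ Hy]]. destruct params_pos as [_ [_ [Hm1 _]]].
  pose proof (near_xs_range z Hz). destruct (Yh_spec h z Hh Hz) as [HY _].
  pose proof (phi1_bounds (Yh h z) ltac:(lra)).
  assert (d0 * d0 <= z * (1 - z) <= 1) by (split; nra).
  assert (0 <= d0 * d0) by nra.
  split.
  - replace (m1 * d0 ^ 3) with ((d0 * d0) * (m1 * d0)) by ring.
    apply Rmult_le_compat; nra.
  - rewrite <- (Rmult_1_l m1). apply Rmult_le_compat; nra.
Qed.

Lemma continuity_pt_Gh h z : Rabs (h - hs) <= eta -> Rabs (z - xs) < 2 * rho ->
  continuity_pt (Gh h) z.
Proof.
  intros Hh Hz. unfold Gh.
  apply continuity_pt_minus; [| apply continuity_pt_const; intros ? ?; reflexivity].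
  apply continuity_pt_plus.
  - apply continuity_pt_scal, derivable_continuous_pt, derivable_pt_id.
  - apply (continuity_pt_scal (Yh h)), continuity_pt_Yh; assumption.
Qed.

Lemma continuity_pt_Fh h z : Rabs (h - hs) <= eta -> Rabs (z - xs) < 2 * rho ->
  continuity_pt (Fh h) z.
Proof.
  intros Hh Hz. unfold Fh.
  apply (continuity_pt_div (Gh h) (fun z => z * (1 - z) * phi1 PS1 TR1 (Yh h z))).
  - apply continuity_pt_Gh; assumption.
  - repeat apply continuity_pt_mult.
    + apply derivable_continuous_pt, derivable_pt_id.
    + apply continuity_pt_minus; [apply continuity_pt_const; intros ? ?; reflexivity |].
      apply derivable_continuous_pt, derivable_pt_id.
    + unfold phi1. apply continuity_pt_plus; [apply continuity_pt_const; intros ? ?; reflexivity |].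
      apply (continuity_pt_scal (Yh h)), continuity_pt_Yh; assumption.
  - pose proof (Fh_denominator_bounds h z Hh Hz). destruct d0_facts as [Hd _].
    destruct params_pos as [_ [_ [Hm1 _]]].
    assert (0 < m1 * d0 ^ 3) by (apply Rmult_lt_0_compat; [| apply pow_lt]; lra).
    lra.
Qed.

Lemma Gh_root_exists h : Rabs (h - hs) <= eta ->
  exists xe, Rabs (xe - xs) <= rho /\ Gh h xe = 0.
Proof.
  intros Hh. destruct rho_facts as [He [He2 _]]. destruct eta_facts as [_ [Het _]].
  destruct d0_facts as [Hd [Hx Hy]]. destruct params_pos as [Hc1 [Hc2 [Hm1 Hm2]]].
  pose proof line_eq.
  assert (Hlo : Rabs (xs - rho - xs) < 2 * rho) by (rewrite Rabs_left1; lra).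
  assert (Hhi : Rabs (xs + rho - xs) < 2 * rho) by (rewrite Rabs_right; lra).
  assert (Hh' := Hh). apply Rabs_le_between in Hh'.
  unfold hs, first_integral in Hh'. fold P1 P2 in Hh'.
  destruct (IVT_interv (Gh h) (xs - rho) (xs + rho)) as [xe [Hxe HG]].
  - intros z Hz. apply continuity_pt_Gh; [assumption | apply Rabs_def1; lra].
  - lra.
  - destruct (Yh_spec h (xs - rho) Hh Hlo) as [HY HP].
    pose proof (P2_bounds (xs - rho) xs ltac:(lra) ltac:(lra)) as [Hp _].
    assert (Yh h (xs - rho) <= ys).
    { destruct (Rle_dec (Yh h (xs - rho)) ys) as [|Hn]; auto.
      pose proof (P1_bounds ys (Yh h (xs - rho)) ltac:(lra) ltac:(lra)) as [Hq _]. nra. }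
    unfold Gh. nra.
  - destruct (Yh_spec h (xs + rho) Hh Hhi) as [HY HP].
    pose proof (P2_bounds xs (xs + rho) ltac:(lra) ltac:(lra)) as [Hp _].
    assert (ys <= Yh h (xs + rho)).
    { destruct (Rle_dec ys (Yh h (xs + rho))) as [|Hn]; auto.
      pose proof (P1_bounds (Yh h (xs + rho)) ys ltac:(lra) ltac:(lra)) as [Hq _]. nra. }
    unfold Gh. nra.
  - exists xe. split; [apply Rabs_le_between; lra | exact HG].
Qed.

Lemma Gh_bounds h xe z : Rabs (h - hs) <= eta ->
  Rabs (xe - xs) < 2 * rho -> Rabs (z - xs) < 2 * rho -> Gh h xe = 0 ->
  c1 * (z - xe) ^ 2 <= Gh h z * (z - xe) <= (c1 + c2 * Ly) * (z - xe) ^ 2.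
Proof.
  intros Hh Hxe Hz HG. destruct params_pos as [_ [Hc2 _]].
  pose proof (Yh_increment h z xe Hh Hz Hxe) as [[Y1 Y2] _].
  replace (Gh h z * (z - xe))
    with (c1 * (z - xe) ^ 2 + c2 * ((Yh h z - Yh h xe) * (z - xe)))
    by (unfold Gh in *; rewrite <- (Rminus_0_r (_ * z + _ - 2)), <- HG; ring).
  split; nra.
Qed.

Lemma Fh_bounds h xe z : Rabs (h - hs) <= eta ->
  Rabs (xe - xs) < 2 * rho -> Rabs (z - xs) < 2 * rho -> Gh h xe = 0 ->
  c1 / m1 * (z - xe) ^ 2 <= Fh h z * (z - xe)
  <= (c1 + c2 * Ly) / (m1 * d0 ^ 3) * (z - xe) ^ 2.
Proof.
  intros Hh Hxe Hz HG.
  pose proof (Gh_bounds h xe z Hh Hxe Hz HG) as [N1 N2].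
  pose proof (Fh_denominator_bounds h z Hh Hz) as [K1 K2].
  destruct d0_facts as [Hd _]. destruct params_pos as [Hc1 [Hc2 [Hm1 _]]].
  pose proof Ly_pos.
  assert (Hk : 0 < m1 * d0 ^ 3) by (apply Rmult_lt_0_compat; [| apply pow_lt]; lra).
  replace (Fh h z * (z - xe))
    with (Gh h z * (z - xe) / (z * (1 - z) * phi1 PS1 TR1 (Yh h z)))
    by (unfold Fh, Rdiv; ring).
  set (K := z * (1 - z) * phi1 PS1 TR1 (Yh h z)) in *.
  set (N := Gh h z * (z - xe)) in *.
  assert (HN : 0 <= N) by (pose proof (pow2_ge_0 (z - xe)); nra).
  split.
  - apply Rle_trans with (N / m1).
    + unfold Rdiv. rewrite Rmult_comm, <- Rmult_assoc.
      apply Rmult_le_compat_r; [left; apply Rinv_0_lt_compat |]; lra.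
    + apply Rmult_le_compat_l; [lra | apply Rinv_le_contravar; lra].
  - apply Rle_trans with (N / (m1 * d0 ^ 3)).
    + apply Rmult_le_compat_l; [lra | apply Rinv_le_contravar; lra].
    + unfold Rdiv. rewrite (Rmult_comm (c1 + c2 * Ly)), Rmult_assoc.
      rewrite (Rmult_comm (/ _)).
      apply Rmult_le_compat_r; [left; apply Rinv_0_lt_compat |]; lra.
Qed.

Definition Psi (h xe z : R) : R := RInt (Fh h) xe z.

Lemma is_derive_Psi h xe z : Rabs (h - hs) <= eta ->
  Rabs (xe - xs) < 2 * rho -> Rabs (z - xs) < 2 * rho ->
  is_derive (Psi h xe) z (Fh h z).
Proof.
  intros Hh Hxe Hz.
  apply (is_derive_RInt (Fh h) (Psi h xe) xe z).
  - assert (Hd : 0 < 2 * rho - Rabs (z - xs)) by lra.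
    exists (mkposreal _ Hd). intros w Hw.
    change (Rabs (w - z) < 2 * rho - Rabs (z - xs)) in Hw.
    assert (Hw' : Rabs (w - xs) < 2 * rho).
    { replace (w - xs) with ((w - z) + (z - xs)) by ring.
      pose proof (Rabs_triang (w - z) (z - xs)). lra. }
    apply (RInt_correct (V := R_CompleteNormedModule)).
    apply (ex_RInt_continuous (V := R_CompleteNormedModule)).
    intros u Hu. apply continuity_pt_filterlim, continuity_pt_Fh; [assumption |].
    apply (near_xs_between xe w); assumption.
  - apply continuity_pt_filterlim, continuity_pt_Fh; assumption.
Qed.

Let cPsi := c1 / m1 / 2.
Let CPsi := (c1 + c2 * Ly) / (m1 * d0 ^ 3) / 2.

Lemma Psi_constants_pos : 0 < cPsi /\ 0 < CPsi.
Proof.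
  destruct d0_facts as [Hd _]. destruct params_pos as [Hc1 [Hc2 [Hm1 _]]].
  pose proof Ly_pos. unfold cPsi, CPsi. split.
  - apply Rdiv_lt_0_compat; [apply Rdiv_lt_0_compat |]; lra.
  - apply Rdiv_lt_0_compat; [| lra]. apply Rdiv_lt_0_compat; [nra |].
    apply Rmult_lt_0_compat; [| apply pow_lt]; lra.
Qed.

Lemma Psi_bounds h xe z : Rabs (h - hs) <= eta ->
  Rabs (xe - xs) < 2 * rho -> Rabs (z - xs) < 2 * rho -> Gh h xe = 0 ->
  cPsi * (z - xe) ^ 2 <= Psi h xe z <= CPsi * (z - xe) ^ 2.
Proof.
  intros Hh Hxe Hz HG.
  assert (Hxe0 : Psi h xe xe = 0) by (unfold Psi; rewrite RInt_point; reflexivity).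
  rewrite <- (Rminus_0_r (Psi h xe z)), <- Hxe0.
  apply quadratic_bounds_of_derive with (df := Fh h).
  - intros w Hw. apply is_derive_Psi; try assumption.
    apply (near_xs_between xe z); assumption.
  - intros w Hw. apply Fh_bounds; try assumption.
    apply (near_xs_between xe z); [assumption | assumption | lra].
Qed.

Definition Dr (r : R) : R := - ln (4 * r * (1 - r)).

Lemma is_derive_Dr r : 0 < r < 1 -> is_derive Dr r (- (1 - 2 * r) / (r * (1 - r))).
Proof.
  intros Hr. unfold Dr. auto_derive; [nra | field; lra].
Qed.

Lemma Dr_bounds r : Rabs (r - 1 / 2) <= 1 / 4 ->
  4 * (r - 1 / 2) ^ 2 <= Dr r <= 6 * (r - 1 / 2) ^ 2.
Proof.
  intros Hr. apply Rabs_le_between in Hr.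
  assert (Hhalf : Dr (1 / 2) = 0).
  { unfold Dr. replace (4 * (1 / 2) * (1 - 1 / 2)) with 1 by field.
    rewrite ln_1. ring. }
  replace (4 * (r - 1 / 2) ^ 2) with (8 / 2 * (r - 1 / 2) ^ 2) by field.
  replace (6 * (r - 1 / 2) ^ 2) with (12 / 2 * (r - 1 / 2) ^ 2) by field.
  rewrite <- (Rminus_0_r (Dr r)), <- Hhalf.
  assert (Hseg : forall w, Rmin (1 / 2) r <= w <= Rmax (1 / 2) r -> 1 / 4 <= w <= 3 / 4).
  { intros w Hw. destruct (Rle_dec (1 / 2) r).
    - rewrite Rmin_left, Rmax_right in Hw by lra. lra.
    - rewrite Rmin_right, Rmax_left in Hw by lra. lra. }
  apply quadratic_bounds_of_derive with (df := fun w => - (1 - 2 * w) / (w * (1 - w))).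
  - intros w Hw. apply is_derive_Dr. specialize (Hseg w Hw). lra.
  - intros w Hw. destruct (Hseg w ltac:(lra)) as [Hw1 Hw2].
    assert (Hq : 3 / 16 <= w * (1 - w) <= 1 / 4).
    { pose proof (Rmult_le_pos (w - 1 / 4) (3 / 4 - w) ltac:(lra) ltac:(lra)).
      pose proof (pow2_ge_0 (w - 1 / 2)). split; nra. }
    assert (Hiq : 4 <= / (w * (1 - w)) <= 16 / 3).
    { split.
      - replace 4 with (/ (1 / 4)) by field. apply Rinv_le_contravar; lra.
      - replace (16 / 3) with (/ (3 / 16)) by field. apply Rinv_le_contravar; lra. }
    replace (- (1 - 2 * w) / (w * (1 - w)) * (w - 1 / 2))
      with (2 * (w - 1 / 2) ^ 2 * / (w * (1 - w))) by (field; nra).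
    pose proof (pow2_ge_0 (w - 1 / 2)). split; nra.
Qed.

(** * Conservation laws along solutions *)

Let FF := PD_field PS1 TR1 PS2 TR2 th1 th2.

Lemma ode_derivatives (x y r : R -> R) t : ode_at FF x y r t ->
  is_derive x t (x t * (1 - x t) * phi1 PS1 TR1 (y t) * (1 - 2 * r t)) /\
  is_derive y t (y t * (1 - y t) * phi2 PS2 TR2 (x t) * (1 - 2 * r t)) /\
  is_derive r t (r t * (1 - r t) * (c1 * x t + c2 * y t - 2)).
Proof.
  intros [Hx [Hy Hr]]. split; [| split]; apply is_derive_Reals; assumption.
Qed.

Definition in_box (a b c : R) : Prop :=
  Rabs (a - xs) <= rho /\ Rabs (b - ys) <= rho /\ Rabs (c - 1 / 2) <= rho.

Lemma in_box_ranges a b c : in_box a b c ->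
  Rabs (a - xs) < 2 * rho /\ d0 <= a <= 1 - d0 /\
  ys - d0 <= b <= ys + d0 /\ d0 <= b <= 1 - d0 /\ 1 / 4 <= c <= 3 / 4.
Proof.
  intros [Ha [Hb Hc]]. destruct d0_facts as [Hd [Hx Hy]]. destruct rho_facts as [He [He2 _]].
  apply Rabs_le_between in Ha, Hb, Hc.
  assert (Ha' : Rabs (a - xs) < 2 * rho) by (apply Rabs_def1; lra).
  pose proof (near_xs_range a Ha'). repeat split; lra.
Qed.

Lemma first_integral_conserved T x y r tau : is_sol_on FF T x y r -> 0 <= tau < T ->
  (forall s, 0 <= s <= tau -> in_box (x s) (y s) (r s)) ->
  first_integral (x tau) (y tau) = first_integral (x 0) (y 0).
Proof.
  intros [Hode [Hrx [Hry _]]] Htau Hbox.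
  apply (eq_at0_of_derive0 (fun s => first_integral (x s) (y s))); [lra | |].
  - intros s Hs. destruct (ode_derivatives x y r s (Hode s ltac:(lra))) as [Dx [Dy _]].
    destruct (in_box_ranges _ _ _ (Hbox s ltac:(lra))) as [_ [Rx [_ [Ry _]]]].
    destruct d0_facts as [Hd _].
    unfold first_integral.
    replace 0 with (scal (x s * (1 - x s) * phi1 PS1 TR1 (y s) * (1 - 2 * r s))
                         (PS2 / x s + TR2 / (1 - x s))
                    - scal (y s * (1 - y s) * phi2 PS2 TR2 (x s) * (1 - 2 * r s))
                         (PS1 / y s + TR1 / (1 - y s))).
    + apply (is_derive_minus (fun t => P2 (x t)) (fun t => P1 (y t))).
      * apply (is_derive_comp P2 x); [apply is_derive_log_potential; lra | exact Dx].
      * apply (is_derive_comp P1 y); [apply is_derive_log_potential; lra | exact Dy].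
    + unfold scal; simpl; unfold mult; simpl. unfold phi1, phi2. field. lra.
  - destruct (in_box_ranges _ _ _ (Hbox 0 ltac:(lra))) as [_ [Rx [_ [Ry _]]]].
    destruct d0_facts as [Hd _].
    apply (right_cont0_plus (fun t => P2 (x t)) (fun t => - P1 (y t))).
    + apply right_cont0_comp; [apply continuity_pt_log_potential; lra | exact Hrx].
    + apply (right_cont0_comp (fun z => - P1 z)); [| exact Hry].
      apply continuity_pt_opp, continuity_pt_log_potential; lra.
Qed.

Lemma first_integral_near a b : d0 <= a <= 1 - d0 -> d0 <= b <= 1 - d0 ->
  Rabs (first_integral a b - hs) <= m2 / d0 * Rabs (a - xs) + m1 / d0 * Rabs (b - ys).
Proof.
  intros Ha Hb. destruct d0_facts as [Hd [Hx Hy]].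
  pose proof (log_potential_lipschitz PS2 TR2 d0 xs a ltac:(lra) ltac:(lra) Hd
                ltac:(lra) Ha) as L2.
  pose proof (log_potential_lipschitz PS1 TR1 d0 ys b ltac:(lra) ltac:(lra) Hd
                ltac:(lra) Hb) as L1.
  unfold hs, first_integral. fold P1 P2 m1 m2 in L1, L2.
  replace (P2 a - P1 b - (P2 xs - P1 ys)) with ((P2 a - P2 xs) + - (P1 b - P1 ys)) by ring.
  pose proof (Rabs_triang (P2 a - P2 xs) (- (P1 b - P1 ys))) as Ht.
  rewrite Rabs_Ropp in Ht. lra.
Qed.

Lemma on_level_curve T x y r s : is_sol_on FF T x y r -> 0 <= s < T ->
  (forall u, 0 <= u <= s -> in_box (x u) (y u) (r u)) ->
  Rabs (first_integral (x 0) (y 0) - hs) <= eta ->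
  Yh (first_integral (x 0) (y 0)) (x s) = y s.
Proof.
  intros Hsol Hs Hbox Hh.
  destruct (in_box_ranges _ _ _ (Hbox s ltac:(lra))) as [Hx [_ [Hy _]]].
  apply Yh_unique; try assumption.
  rewrite <- (first_integral_conserved T x y r s) by assumption.
  unfold first_integral. ring.
Qed.

Lemma energy_conserved T x y r tau xe : is_sol_on FF T x y r -> 0 <= tau < T ->
  (forall s, 0 <= s <= tau -> in_box (x s) (y s) (r s)) ->
  Rabs (first_integral (x 0) (y 0) - hs) <= eta -> Rabs (xe - xs) < 2 * rho ->
  Dr (r tau) + Psi (first_integral (x 0) (y 0)) xe (x tau)
  = Dr (r 0) + Psi (first_integral (x 0) (y 0)) xe (x 0).
Proof.
  intros Hsol Htau Hbox Hh Hxe. set (h := first_integral (x 0) (y 0)) in *.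
  pose proof Hsol as [Hode [Hrx [_ Hrr]]].
  apply (eq_at0_of_derive0 (fun s => Dr (r s) + Psi h xe (x s))); [lra | |].
  - intros s Hs. destruct (ode_derivatives x y r s (Hode s ltac:(lra))) as [Dx [_ Dr']].
    destruct (in_box_ranges _ _ _ (Hbox s ltac:(lra))) as [Ux [Rx [HYr [Ry Rr]]]].
    assert (HY : Yh h (x s) = y s).
    { apply (on_level_curve T x y r s); [assumption | lra | | assumption].
      intros; apply Hbox; lra. }
    pose proof (phi1_bounds (y s) Ry) as [Hphi _].
    destruct d0_facts as [Hd _]. destruct params_pos as [_ [_ [Hm1 _]]].
    assert (0 < m1 * d0) by (apply Rmult_lt_0_compat; lra).
    replace 0 with (scal (r s * (1 - r s) * (c1 * x s + c2 * y s - 2))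
                         (- (1 - 2 * r s) / (r s * (1 - r s)))
                  + scal (x s * (1 - x s) * phi1 PS1 TR1 (y s) * (1 - 2 * r s)) (Fh h (x s))).
    + apply (is_derive_plus (fun t => Dr (r t)) (fun t => Psi h xe (x t))).
      * apply (is_derive_comp Dr r); [apply is_derive_Dr; lra | exact Dr'].
      * apply (is_derive_comp (Psi h xe) x); [apply is_derive_Psi; assumption | exact Dx].
    + unfold scal; simpl; unfold mult; simpl. unfold Fh, Gh. rewrite HY in *.
      field. repeat split; apply Rgt_not_eq; lra.
  - destruct (in_box_ranges _ _ _ (Hbox 0 ltac:(lra))) as [Ux [_ [_ [_ Rr]]]].
    apply (right_cont0_plus (fun t => Dr (r t)) (fun t => Psi h xe (x t))).
    + apply right_cont0_comp; [| exact Hrr].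
      apply derivable_continuous_pt. eexists. apply is_derive_Reals, is_derive_Dr. lra.
    + apply right_cont0_comp; [| exact Hrx].
      apply derivable_continuous_pt. eexists. apply is_derive_Reals, is_derive_Psi; assumption.
Qed.

Lemma energy_comparison T x y r tau xe : is_sol_on FF T x y r -> 0 <= tau < T ->
  (forall s, 0 <= s <= tau -> in_box (x s) (y s) (r s)) ->
  Rabs (first_integral (x 0) (y 0) - hs) <= eta -> Rabs (xe - xs) < 2 * rho ->
  Gh (first_integral (x 0) (y 0)) xe = 0 ->
  cPsi * (x tau - xe) ^ 2 + 4 * (r tau - 1 / 2) ^ 2
  <= CPsi * (x 0 - xe) ^ 2 + 6 * (r 0 - 1 / 2) ^ 2.
Proof.
  intros Hsol Htau Hbox Hh Hxe HG.
  destruct (in_box_ranges _ _ _ (Hbox 0 ltac:(lra))) as [U0 [_ [_ [_ R0]]]].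
  destruct (in_box_ranges _ _ _ (Hbox tau ltac:(lra))) as [Ut [_ [_ [_ Rt]]]].
  pose proof (energy_conserved T x y r tau xe Hsol Htau Hbox Hh Hxe) as HE.
  pose proof (Psi_bounds _ xe (x tau) Hh Hxe Ut HG) as [Pt _].
  pose proof (Psi_bounds _ xe (x 0) Hh Hxe U0 HG) as [_ P0].
  pose proof (Dr_bounds (r 0) ltac:(apply Rabs_le_between; lra)) as [_ D0].
  pose proof (Dr_bounds (r tau) ltac:(apply Rabs_le_between; lra)) as [Dt _].
  lra.
Qed.

(** * Stability *)

Lemma root_offset_bound a b xe :
  Rabs (a - xs) < 2 * rho -> ys - d0 <= b <= ys + d0 ->
  Rabs (first_integral a b - hs) <= eta -> Rabs (xe - xs) < 2 * rho ->
  Gh (first_integral a b) xe = 0 ->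
  c1 ^ 2 * (a - xe) ^ 2 <= 2 * (c1 ^ 2 + c2 ^ 2) * ((a - xs) ^ 2 + (b - ys) ^ 2).
Proof.
  intros Ha Hb Hh Hxe HG. set (h := first_integral a b) in *.
  assert (HY : Yh h a = b) by (apply Yh_unique; try assumption; unfold h, first_integral; ring).
  pose proof (Gh_bounds h xe a Hh Hxe Ha HG) as [HGa _].
  assert (HGv : Gh h a = c1 * (a - xs) + c2 * (b - ys))
    by (unfold Gh; rewrite HY; pose proof line_eq; lra).
  rewrite HGv in HGa. destruct params_pos as [Hc1 _].
  set (g := c1 * (a - xs) + c2 * (b - ys)) in *.
  assert (c1 ^ 2 * (a - xe) ^ 2 <= g ^ 2).
  { pose proof (pow2_ge_0 (g - c1 * (a - xe))). nra. }
  pose proof (pow2_ge_0 (c1 * (a - xs) - c2 * (b - ys))).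
  pose proof (pow2_ge_0 (c2 * (a - xs))). pose proof (pow2_ge_0 (c1 * (b - ys))).
  unfold g in *. nra.
Qed.

Definition sqdev (a b c : R) : R := (a - xs) ^ 2 + (b - ys) ^ 2 + (c - 1 / 2) ^ 2.

Lemma sqdev_components a b c : 0 <= sqdev a b c /\
  (a - xs) ^ 2 <= sqdev a b c /\ (b - ys) ^ 2 <= sqdev a b c /\ (c - 1 / 2) ^ 2 <= sqdev a b c.
Proof.
  unfold sqdev. pose proof (pow2_ge_0 (a - xs)). pose proof (pow2_ge_0 (b - ys)).
  pose proof (pow2_ge_0 (c - 1 / 2)). lra.
Qed.

Lemma trajectory_xr_bound : exists K, 0 < K /\
  forall T x y r tau, is_sol_on FF T x y r -> 0 <= tau < T ->
  (forall s, 0 <= s <= tau -> in_box (x s) (y s) (r s)) ->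
  Rabs (first_integral (x 0) (y 0) - hs) <= eta ->
  (x tau - x 0) ^ 2 + (r tau - 1 / 2) ^ 2 <= K * sqdev (x 0) (y 0) (r 0).
Proof.
  destruct params_pos as [Hc1 [Hc2 _]]. destruct Psi_constants_pos as [Hcm HCM].
  set (K1 := 2 * (c1 ^ 2 + c2 ^ 2) / c1 ^ 2).
  set (K2 := CPsi * K1 + 6).
  assert (HK1 : 0 < K1) by (apply Rdiv_lt_0_compat; nra).
  assert (HK2 : 0 < K2 / cPsi) by (apply Rdiv_lt_0_compat; unfold K2; nra).
  exists (2 * (K2 / cPsi + K1) + K2 / 4). split; [unfold K2 in *; nra |].
  intros T x y r tau Hsol Htau Hbox Hh.
  set (h := first_integral (x 0) (y 0)) in *.
  destruct (in_box_ranges _ _ _ (Hbox 0 ltac:(lra))) as [U0 [_ [Y0 _]]].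
  destruct (Gh_root_exists h Hh) as [xe [Hxe HG]].
  assert (Uxe : Rabs (xe - xs) < 2 * rho) by (destruct rho_facts as [He _]; lra).
  set (S0 := sqdev (x 0) (y 0) (r 0)).
  pose proof (sqdev_components (x 0) (y 0) (r 0)) as [_ [Sx [Sy Sr]]]. fold S0 in Sx, Sy, Sr.
  assert (Hoff : (x 0 - xe) ^ 2 <= K1 * S0).
  { pose proof (root_offset_bound (x 0) (y 0) xe U0 Y0 Hh Uxe HG).
    apply Rmult_le_reg_l with (c1 ^ 2); [nra |].
    replace (c1 ^ 2 * (K1 * S0)) with (2 * (c1 ^ 2 + c2 ^ 2) * S0) by (unfold K1; field; lra).
    assert ((x 0 - xs) ^ 2 + (y 0 - ys) ^ 2 <= S0)
      by (unfold S0, sqdev; pose proof (pow2_ge_0 (r 0 - 1 / 2)); lra).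
    nra. }
  pose proof (energy_comparison T x y r tau xe Hsol Htau Hbox Hh Uxe HG) as HE.
  assert (HE0 : cPsi * (x tau - xe) ^ 2 + 4 * (r tau - 1 / 2) ^ 2 <= K2 * S0)
    by (unfold K2; nra).
  assert (Hxt : (x tau - xe) ^ 2 <= K2 / cPsi * S0).
  { apply Rmult_le_reg_l with cPsi; [lra |].
    replace (cPsi * (K2 / cPsi * S0)) with (K2 * S0) by (field; lra).
    pose proof (pow2_ge_0 (r tau - 1 / 2)). lra. }
  pose proof (pow2_ge_0 (x tau - xe)). pose proof (pow2_ge_0 ((x tau - xe) + (x 0 - xe))).
  nra.
Qed.

Lemma trajectory_sqdev_bound : exists K, 1 <= K /\
  forall T x y r tau, is_sol_on FF T x y r -> 0 <= tau < T ->
  (forall s, 0 <= s <= tau -> in_box (x s) (y s) (r s)) ->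
  Rabs (first_integral (x 0) (y 0) - hs) <= eta ->
  sqdev (x tau) (y tau) (r tau) <= K * sqdev (x 0) (y 0) (r 0).
Proof.
  destruct trajectory_xr_bound as [K [HK Hxr]].
  exists (2 * (K + 1) + 2 * (Ly ^ 2 * K + 1) + K).
  split; [pose proof (pow2_ge_0 Ly); nra |].
  intros T x y r tau Hsol Htau Hbox Hh.
  pose proof (Hxr T x y r tau Hsol Htau Hbox Hh) as Hb.
  set (h := first_integral (x 0) (y 0)) in *. set (S0 := sqdev (x 0) (y 0) (r 0)) in *.
  pose proof (sqdev_components (x 0) (y 0) (r 0)) as [_ [Sx [Sy _]]]. fold S0 in Sx, Sy.
  destruct (in_box_ranges _ _ _ (Hbox 0 ltac:(lra))) as [U0 _].
  destruct (in_box_ranges _ _ _ (Hbox tau ltac:(lra))) as [Ut _].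
  assert (Hdy : (y tau - y 0) ^ 2 <= Ly ^ 2 * (x tau - x 0) ^ 2).
  { rewrite <- (on_level_curve T x y r 0), <- (on_level_curve T x y r tau);
      try (assumption || lra || (intros; apply Hbox; lra)).
    apply (Yh_increment h (x tau) (x 0) Hh Ut U0). }
  assert (Ly ^ 2 * (x tau - x 0) ^ 2 <= Ly ^ 2 * (K * S0)).
  { apply Rmult_le_compat_l; [apply pow2_ge_0 |].
    pose proof (pow2_ge_0 (r tau - 1 / 2)). lra. }
  assert ((x tau - xs) ^ 2 <= 2 * (x tau - x 0) ^ 2 + 2 * (x 0 - xs) ^ 2)
    by (pose proof (pow2_ge_0 ((x tau - x 0) - (x 0 - xs))); nra).
  assert ((y tau - ys) ^ 2 <= 2 * (y tau - y 0) ^ 2 + 2 * (y 0 - ys) ^ 2)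
    by (pose proof (pow2_ge_0 ((y tau - y 0) - (y 0 - ys))); nra).
  pose proof (pow2_ge_0 (x tau - x 0)). pose proof (pow2_ge_0 (r tau - 1 / 2)).
  unfold sqdev. lra.
Qed.

Lemma in_box_of_sqdev a b c : sqdev a b c <= rho ^ 2 -> in_box a b c.
Proof.
  intros H. destruct rho_facts as [He _]. pose proof (sqdev_components a b c) as [_ [Ha [Hb Hc]]].
  repeat split; apply Rabs_le_of_sq_le; lra.
Qed.

Definition dmax : R := Rmin rho (eta * d0 / (m1 + m2)).

Lemma dmax_pos : 0 < dmax.
Proof.
  destruct rho_facts as [He _]. destruct eta_facts as [Het _]. destruct d0_facts as [Hd _].
  destruct params_pos as [_ [_ [Hm1 Hm2]]].
  apply Rmin_glb_lt; [lra | apply Rdiv_lt_0_compat; nra].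
Qed.

Lemma first_integral_near_of_sqdev a b c : sqdev a b c <= dmax ^ 2 ->
  Rabs (first_integral a b - hs) <= eta.
Proof.
  intros H. destruct d0_facts as [Hd _]. destruct params_pos as [_ [_ [Hm1 Hm2]]].
  pose proof dmax_pos.
  assert (Hd1 : dmax <= rho) by apply Rmin_l.
  assert (Hd2 : dmax <= eta * d0 / (m1 + m2)) by apply Rmin_r.
  pose proof (sqdev_components a b c) as [_ [Ha [Hb _]]].
  assert (Ha' : Rabs (a - xs) <= dmax) by (apply Rabs_le_of_sq_le; lra).
  assert (Hb' : Rabs (b - ys) <= dmax) by (apply Rabs_le_of_sq_le; lra).
  assert (Hbox : in_box a b c) by (apply in_box_of_sqdev; pose proof (pow_incr dmax rho 2); nra).
  destruct (in_box_ranges a b c Hbox) as [_ [Ra [_ [Rb _]]]].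
  pose proof (first_integral_near a b Ra Rb).
  assert ((m1 + m2) / d0 * dmax <= eta).
  { apply Rmult_le_reg_l with (d0 / (m1 + m2)); [apply Rdiv_lt_0_compat; lra |].
    replace (d0 / (m1 + m2) * ((m1 + m2) / d0 * dmax)) with dmax by (field; lra).
    replace (d0 / (m1 + m2) * eta) with (eta * d0 / (m1 + m2)) by (field; lra). lra. }
  assert (m2 / d0 * Rabs (a - xs) <= m2 / d0 * dmax)
    by (apply Rmult_le_compat_l; [apply Rdiv_le_0_compat |]; lra).
  assert (m1 / d0 * Rabs (b - ys) <= m1 / d0 * dmax)
    by (apply Rmult_le_compat_l; [apply Rdiv_le_0_compat |]; lra).
  assert ((m1 + m2) / d0 * dmax = m2 / d0 * dmax + m1 / d0 * dmax) by (field; lra).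
  lra.
Qed.

Lemma sqdev_trajectory_continuity T x y r : is_sol_on FF T x y r ->
  (forall t, 0 < t < T -> continuity_pt (fun t => sqdev (x t) (y t) (r t)) t) /\
  right_cont0 (fun t => sqdev (x t) (y t) (r t)).
Proof.
  intros [Hode [Hrx [Hry Hrr]]]. split.
  - intros t Ht. destruct (ode_derivatives x y r t (Hode t Ht)) as [Dx [Dy Dr']].
    apply derivable_continuous_pt, ex_derive_Reals_0. unfold sqdev.
    auto_derive. repeat split; eexists; eassumption.
  - unfold sqdev.
    apply (right_cont0_plus (fun t => (x t - xs) ^ 2 + (y t - ys) ^ 2)
                            (fun t => (r t - 1 / 2) ^ 2));
      [apply (right_cont0_plus (fun t => (x t - xs) ^ 2) (fun t => (y t - ys) ^ 2)) |];
      apply (right_cont0_comp (fun z => (z - _) ^ 2)); auto;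
      apply derivable_continuous_pt; reg.
Qed.

Lemma PD_lyapunov_stable : lyapunov_stable FF (xs, ys, 1 / 2).
Proof.
  intros eps Heps.
  destruct trajectory_sqdev_bound as [K [HK Hbound]].
  destruct rho_facts as [He _]. pose proof dmax_pos.
  set (e1 := Rmin eps dmax).
  assert (He1 : 0 < e1) by (apply Rmin_glb_lt; lra).
  assert (He1a : e1 <= eps) by apply Rmin_l.
  assert (He1b : e1 <= dmax) by apply Rmin_r.
  assert (Hdmax : dmax <= rho) by apply Rmin_l.
  exists (e1 / K). split; [apply Rdiv_lt_0_compat; lra |].
  assert (Hdel : e1 / K <= e1).
  { apply Rmult_le_reg_l with K; [lra |].
    replace (K * (e1 / K)) with e1 by (field; lra). nra. }
  assert (HKdel : K * (e1 / K) ^ 2 <= e1 ^ 2).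
  { replace (K * (e1 / K) ^ 2) with (e1 * (e1 / K)) by (field; lra).
    assert (0 < e1 / K) by (apply Rdiv_lt_0_compat; lra). nra. }
  intros T x y r Hsol H0 t Ht.
  change (sqrt (sqdev (x 0) (y 0) (r 0)) < e1 / K) in H0.
  change (sqrt (sqdev (x t) (y t) (r t)) < eps).
  assert (Hf0 : sqdev (x 0) (y 0) (r 0) < (e1 / K) ^ 2).
  { pose proof (sqdev_components (x 0) (y 0) (r 0)) as [Hpos _].
    pose proof (sqrt_pos (sqdev (x 0) (y 0) (r 0))).
    rewrite <- (sqrt_sqrt (sqdev (x 0) (y 0) (r 0))) by exact Hpos. nra. }
  set (f := fun s => sqdev (x s) (y s) (r s)).
  change (f 0 < (e1 / K) ^ 2) in Hf0.
  assert (Hf0' : f 0 <= dmax ^ 2) by (pose proof (pow_incr (e1 / K) dmax 2); nra).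
  destruct (sqdev_trajectory_continuity T x y r Hsol) as [Hc Hr].
  assert (Hft : f t < e1 ^ 2).
  { apply (continuous_induction T (e1 ^ 2) f Hc Hr); [nra | | exact Ht].
    intros tau Htau Hle.
    assert (Hbox : forall s, 0 <= s <= tau -> in_box (x s) (y s) (r s)).
    { intros s Hs. apply in_box_of_sqdev.
      pose proof (Hle s Hs). pose proof (pow_incr e1 rho 2). unfold f in *. nra. }
    pose proof (Hbound T x y r tau Hsol Htau Hbox (first_integral_near_of_sqdev _ _ _ Hf0')).
    unfold f in *. nra. }
  pose proof (sqdev_components (x t) (y t) (r t)) as [Hpos _].
  assert (sqrt (f t) < e1).
  { rewrite <- (sqrt_pow2 e1) by lra. apply sqrt_lt_1_alt. split; [exact Hpos | exact Hft]. }
  unfold f in *. lra.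
Qed.

Lemma PD_equilibria_near eps : eps > 0 ->
  exists a b c, FF a b c = (0, 0, 0) /\ 0 < dist3 (a, b, c) (xs, ys, 1 / 2) < eps.
Proof.
  intros Heps. destruct params_pos as [Hc1 [Hc2 _]].
  set (k := eps / (2 * (c1 + c2))).
  assert (Hk : 0 < k) by (apply Rdiv_lt_0_compat; lra).
  exists (xs + c2 * k), (ys - c1 * k), (1 / 2). split.
  - assert (Hg : (1 + th1) * (xs + c2 * k) + (1 + th2) * (ys - c1 * k) - 2 = 0)
      by (pose proof line_eq; unfold c1, c2 in *; lra).
    unfold FF, PD_field. rewrite Hg.
    replace (1 - 2 * (1 / 2)) with 0 by field. rewrite !Rmult_0_r. reflexivity.
  - change (0 < sqrt ((xs + c2 * k - xs) ^ 2 + (ys - c1 * k - ys) ^ 2 + (1 / 2 - 1 / 2) ^ 2)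
            < eps).
    replace ((xs + c2 * k - xs) ^ 2 + (ys - c1 * k - ys) ^ 2 + (1 / 2 - 1 / 2) ^ 2)
      with ((c2 * k) ^ 2 + (c1 * k) ^ 2) by ring.
    split.
    + apply sqrt_lt_R0. pose proof (pow2_ge_0 (c1 * k)).
      assert (0 < (c2 * k) ^ 2) by (apply pow_lt; nra). lra.
    + apply Rle_lt_trans with (sqrt (((c1 + c2) * k) ^ 2)).
      * apply sqrt_le_1_alt.
        assert (0 <= (c1 * k) * (c2 * k)) by (apply Rmult_le_pos; apply Rmult_le_pos; lra).
        replace (((c1 + c2) * k) ^ 2)
          with ((c2 * k) ^ 2 + (c1 * k) ^ 2 + 2 * ((c1 * k) * (c2 * k))) by ring.
        lra.
      * rewrite sqrt_pow2 by nra. unfold k.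
        replace ((c1 + c2) * (eps / (2 * (c1 + c2)))) with (eps / 2) by (field; lra). lra.
Qed.

End PrisonersDilemma.

Theorem corollary1 (PS1 TR1 PS2 TR2 th1 th2 xs ys : R) :
  PS1 > 0 -> TR1 > 0 -> PS2 > 0 -> TR2 > 0 -> th1 > 0 -> th2 > 0 ->
  0 < xs < 1 -> 0 < ys < 1 ->
  (1 + th1) * xs + (1 + th2) * ys = 2 ->
  neutrally_stable (PD_field PS1 TR1 PS2 TR2 th1 th2) (xs, ys, 1 / 2).
Proof.
  intros HPS1 HTR1 HPS2 HTR2 Hth1 Hth2 Hxs Hys Hline. split.
  - apply PD_lyapunov_stable; assumption.
  - intros [_ Hattr]. revert Hattr. apply not_attractive_of_equilibria.
    apply PD_equilibria_near; assumption.
Qed.
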